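(* Let $n$ be even, let $q\ge2$ be even, $p\ge1$, and let $f:\mathbb{Z}_2^n\to\mathbb{Z}_q$ satisfy $f(x)\equiv\frac q2 a(x)+\sum_{j=0}^{p-1}2^ja_j(x)\pmod q$ for Boolean functions $a,a_0,\dots,a_{p-1}$ on $\mathbb{Z}_2^n$. For $i\in\{0,\dots,2^p-1\}$ let $g_i=a\oplus z_{i,0}a_0\oplus\cdots\oplus z_{i,p-1}a_{p-1}$, and for $u\in\mathbb{Z}_2^n$ let $W(u)=(W_{g_0}(u),\dots,W_{g_{2^p-1}}(u))$. Suppose that every $g_i$ ($i=0,\dots,2^p-1$) is bent, and that for every $u\in\mathbb{Z}_2^n$ there exist $r\in\{0,\dots,2^p-1\}$ and a sign $\epsilon\in\{\pm1\}$ with $W(u)=\epsilon H^{(r)}_{2^p}$ (as vectors). Then $f$ is generalized bent.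
   Context: For $i\in\{0,\dots,2^m-1\}$, $z_i=(z_{i,0},\dots,z_{i,m-1})\in\mathbb{Z}_2^m$ is the binary vector with $i=\sum_j z_{i,j}2^j$. $H_{2^m}$ is the Sylvester–Hadamard matrix with entries $(H_{2^m})_{k,i}=(-1)^{z_k\cdot z_i}$, and $H^{(r)}_{2^m}$ its $r$-th row. $W_g(u)=2^{-n/2}\sum_{x\in\mathbb{Z}_2^n}(-1)^{g(x)\oplus u\cdot x}$; $g$ is bent if $|W_g(u)|=1$ for all $u$. With $\zeta=e^{2\pi\mathrm{i}/q}$, $\mathcal{H}_f(u)=2^{-n/2}\sum_{x}\zeta^{f(x)}(-1)^{u\cdot x}$, and $f$ is generalized bent if $|\mathcal{H}_f(u)|=1$ for all $u\in\mathbb{Z}_2^n$. *)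

From HB Require Import structures.
From mathcomp Require Import all_boot all_order all_algebra all_field.
Set Implicit Arguments. Unset Strict Implicit. Unset Printing Implicit Defensive.
Import Order.TTheory GRing.Theory Num.Theory.
Local Open Scope ring_scope.

(* Z_2^n, encoded as boolean vectors of length n *)
Definition vec (n : nat) := {ffun 'I_n -> bool}.

Definition dotv (n : nat) (u x : vec n) : bool :=
  \big[addb/false]_(i < n) (u i && x i).

Definition sgnb (b : bool) : algC := (-1) ^+ b.

(* z_{i,j} : j-th binary digit of i *)
Definition zbit (i j : nat) : bool := odd (i %/ 2 ^ j).

Definition walsh (n : nat) (g : vec n -> bool) (u : vec n) : algC :=
  (sqrtC (2%:R ^+ n))^-1 * \sum_(x : vec n) sgnb (g x (+) dotv u x).

Definition bent (n : nat) (g : vec n -> bool) : Prop :=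
  forall u : vec n, `|walsh g u| = 1.

(* zeta = e^{2 pi i / q}; q.-root (-1) is e^{i pi / q} in algC *)
Definition zeta (q : nat) : algC := (q.-root (-1)) ^+ 2.

Definition gwalsh (n q : nat) (f : vec n -> nat) (u : vec n) : algC :=
  (sqrtC (2%:R ^+ n))^-1 * \sum_(x : vec n) zeta q ^+ (f x) * sgnb (dotv u x).

Definition gbent (n q : nat) (f : vec n -> nat) : Prop :=
  forall u : vec n, `|gwalsh q f u| = 1.

(* Sylvester-Hadamard matrix entry (H_{2^m})_{k,i} = (-1)^{z_k . z_i} *)
Definition hadamard (m k i : nat) : algC :=
  sgnb (\big[addb/false]_(j < m) (zbit k j && zbit i j)).

Definition gcomp (n p : nat) (a : vec n -> bool) (aj : 'I_p -> vec n -> bool)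
  (i : nat) (x : vec n) : bool :=
  a x (+) \big[addb/false]_(j < p) (zbit i j && aj j x).

(* Write [w_j = zeta^(2^j)], so that [zeta^f(x) = (-1)^a(x) * prod_j w_j^a_j(x)].
   For [c] a bit, [w^c = (1+w)/2 + (1-w)/2 * (-1)^c]; expanding the product
   of these binomials over the [2^p] bit patterns [z_i] writes
   [prod_j w_j^c_j] as [sum_i C_i (-1)^(z_i . c)] with coefficients [C_i]
   independent of [c].  Taking [c = (a_j(x))_j] expresses the generalized
   Walsh transform as [sum_i C_i W_{g_i}(u)].  If [W(u) = eps H^(r)], the
   same expansion read backwards with [c = z_r] gives
   [eps * prod_j w_j^z_(r,j)], a product of roots of unity. *)

From HB Require Import structures.
From mathcomp Require Import all_boot all_order all_algebra all_field.
From mathcomp Require Import ring.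
Set Implicit Arguments. Unset Strict Implicit. Unset Printing Implicit Defensive.
Import Order.TTheory GRing.Theory Num.Theory.
Local Open Scope ring_scope.

Lemma big_ord_double (R : nmodType) (m : nat) (F : nat -> R) :
  \sum_(i < m.*2) F i = \sum_(k < m) (F k.*2 + F k.*2.+1).
Proof.
elim: m => [|m IHm]; first by rewrite !big_ord0.
by rewrite doubleS !big_ord_recr /= IHm addrA.
Qed.

Lemma zbit0 (i : nat) : zbit i 0 = odd i.
Proof. by rewrite /zbit expn0 divn1. Qed.

Lemma zbitS (i j : nat) : zbit i j.+1 = zbit i./2 j.
Proof. by rewrite /zbit expnS divnMA divn2. Qed.

Lemma sum_prod_zbit (R : pzSemiRingType) (p : nat) (K : 'I_p -> bool -> R) :
  \sum_(i < 2 ^ p) \prod_(j < p) K j (zbit i j) =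
  \prod_(j < p) (K j false + K j true).
Proof.
elim: p K => [|p IHp] K; first by rewrite !big_ord0 big_ord1 big_ord0.
rewrite expnS mul2n (@big_ord_double _ _ (fun i => \prod_(j < p.+1) K j (zbit i j))).
rewrite big_ord_recl -(IHp (fun j => K (lift ord0 j))).
rewrite mulr_sumr; apply: eq_bigr => k _.
have half_even : (k.*2)./2 = k by rewrite -[RHS](half_bit_double k false).
have half_odd : (k.*2.+1)./2 = k by exact: uphalf_double.
rewrite !big_ord_recl !zbit0 /= odd_double mulrDl.
by congr (_ * _ + _ * _); apply: eq_bigr => j _; rewrite /bump add1n zbitS ?half_even ?half_odd.
Qed.

Lemma sgnbD (b1 b2 : bool) : sgnb (b1 (+) b2) = sgnb b1 * sgnb b2.
Proof. by case: b1; case: b2; rewrite /sgnb /= ?expr0 ?expr1 ?mulrNN ?mulr1 ?mul1r. Qed.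

Lemma sgnb_big (m : nat) (F : 'I_m -> bool) :
  sgnb (\big[addb/false]_(j < m) F j) = \prod_(j < m) sgnb (F j).
Proof. by apply: (big_morph sgnb sgnbD); rewrite /sgnb expr0. Qed.

Lemma hadamardC (m k i : nat) : hadamard m k i = hadamard m i k.
Proof. by rewrite /hadamard; congr sgnb; apply: eq_bigr => j _; rewrite andbC. Qed.

Lemma zeta_expq (q : nat) : (0 < q)%N -> zeta q ^+ q = 1.
Proof. by move=> q_gt0; rewrite /zeta -exprM mulnC exprM rootCK // sqrrN expr1n. Qed.

Lemma zeta_exp_half (q : nat) : (0 < q)%N -> ~~ odd q -> zeta q ^+ q./2 = -1.
Proof. by move=> q_gt0 q_even; rewrite /zeta -exprM mul2n even_halfK // rootCK. Qed.

Lemma norm_zeta (q : nat) : (0 < q)%N -> `|zeta q| = 1.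
Proof.
move=> q_gt0; apply/eqP; rewrite -(pexpr_eq1 q_gt0) ?normr_ge0 //.
by rewrite -normrX zeta_expq // normr1.
Qed.

Definition half_coef (w : algC) (b : bool) : algC :=
  if b then (1 - w) / 2%:R else (1 + w) / 2%:R.

Lemma expr_bit_half_coef (w : algC) (c : bool) :
  w ^+ c = half_coef w false * sgnb (false && c) + half_coef w true * sgnb (true && c).
Proof.
have two_neq0 : (2%:R : algC) != 0 by rewrite pnatr_eq0.
by rewrite /half_coef /sgnb; case: c; rewrite /= ?expr0 ?expr1; field.
Qed.

Lemma prod_expr_bit_expand (p : nat) (w : 'I_p -> algC) (c : 'I_p -> bool) :
  \prod_(j < p) w j ^+ c j =
  \sum_(i < 2 ^ p) (\prod_(j < p) half_coef (w j) (zbit i j)) *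
                   sgnb (\big[addb/false]_(j < p) (zbit i j && c j)).
Proof.
rewrite (eq_bigr _ (fun j _ => expr_bit_half_coef (w j) (c j))).
rewrite -(sum_prod_zbit (fun j b => half_coef (w j) b * sgnb (b && c j))).
by apply: eq_bigr => i _; rewrite sgnb_big -big_split.
Qed.

Lemma walsh_gcomp (n p : nat) (a : vec n -> bool) (aj : 'I_p -> vec n -> bool)
    (i : nat) (u : vec n) :
  walsh (gcomp a aj i) u = (sqrtC (2%:R ^+ n))^-1 *
    \sum_(x : vec n) sgnb (a x) *
      sgnb (\big[addb/false]_(j < p) (zbit i j && aj j x)) * sgnb (dotv u x).
Proof. by congr (_ * _); apply: eq_bigr => x _; rewrite /gcomp !sgnbD. Qed.

Lemma gwalsh_half_coef_expand (n q p : nat) (F : vec n -> nat)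
    (a : vec n -> bool) (aj : 'I_p -> vec n -> bool) (w : 'I_p -> algC) :
  (forall x, zeta q ^+ F x = sgnb (a x) * \prod_(j < p) w j ^+ aj j x) ->
  forall u, gwalsh q F u =
    \sum_(i < 2 ^ p) (\prod_(j < p) half_coef (w j) (zbit i j)) *
                     walsh (gcomp a aj i) u.
Proof.
move=> zetaF u; rewrite /gwalsh.
under eq_bigr => x _ do rewrite zetaF prod_expr_bit_expand mulr_sumr mulr_suml.
under [RHS]eq_bigr => i _ do rewrite walsh_gcomp !mulr_sumr.
rewrite exchange_big mulr_sumr; apply: eq_bigr => i _.
by rewrite mulr_sumr; apply: eq_bigr => x _; ring.
Qed.

Lemma zeta_expr_bits (n q p : nat) (F : vec n -> nat)
    (a : vec n -> bool) (aj : 'I_p -> vec n -> bool) :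
  (0 < q)%N -> ~~ odd q ->
  (forall x : vec n,
     F x = (q./2 * a x + \sum_(j < p) 2 ^ j * aj j x)%N %[mod q]) ->
  forall x, zeta q ^+ F x =
    sgnb (a x) * \prod_(j < p) (zeta q ^+ (2 ^ j)%N) ^+ aj j x.
Proof.
move=> q_gt0 q_even F_mod x.
rewrite -(expr_mod _ (zeta_expq q_gt0)) F_mod (expr_mod _ (zeta_expq q_gt0)).
rewrite exprD exprM zeta_exp_half // expr_sum.
by congr (_ * _); apply: eq_bigr => j _; rewrite exprM.
Qed.

Theorem theorem4 (n q p : nat) (f : vec n -> 'Z_q)
  (a : vec n -> bool) (aj : 'I_p -> vec n -> bool) :
  ~~ odd n -> (2 <= q)%N -> ~~ odd q -> (1 <= p)%N ->
  (forall x : vec n,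
     (f x : nat) = (q./2 * a x + \sum_(j < p) 2 ^ j * aj j x)%N %[mod q]) ->
  (forall i : 'I_(2 ^ p), bent (gcomp a aj i)) ->
  (forall u : vec n, exists (r : 'I_(2 ^ p)) (eps : algC),
      (eps = 1 \/ eps = -1) /\
      forall i : 'I_(2 ^ p), walsh (gcomp a aj i) u = eps * hadamard p r i) ->
  gbent q (fun x => (f x : nat)).
Proof.
move=> _ q_ge2 q_even _ f_mod _ W_hadamard u.
have q_gt0 : (0 < q)%N by apply: leq_trans q_ge2.
pose w (j : 'I_p) := zeta q ^+ (2 ^ j)%N.
have [r [eps [eps_sign W_row]]] := W_hadamard u.
have gwalsh_u : gwalsh q (fun x => (f x : nat)) u = eps * \prod_(j < p) w j ^+ zbit r j.
  rewrite (gwalsh_half_coef_expand (zeta_expr_bits q_gt0 q_even f_mod)).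
  under eq_bigr => i _ do rewrite W_row mulrCA.
  rewrite -mulr_sumr (prod_expr_bit_expand w (zbit r)).
  by congr (_ * _); apply: eq_bigr => i _; rewrite hadamardC /hadamard.
have norm_eps : `|eps| = 1 by case: eps_sign => ->; rewrite ?normrN normr1.
rewrite gwalsh_u normrM norm_eps mul1r normr_prod big1 // => j _.
by rewrite /w -exprM normrX norm_zeta // expr1n.
Qed.
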